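(* For every class $\mathcal{G}$ of graphs of bounded shrub-depth and every positive integer $r$, there exists a positive integer $c$ such that every graph in $\mathcal{G}$ has a weak $r$-guidance system of maximum outdegree at most $c$.
   Context: All graphs are finite, simple and undirected. A partial orientation of $G$ is a directed graph $\vec{H}$ on $V(G)$ such that every $(u,v)\in E(\vec{H})$ satisfies $uv\in E(G)$ (each edge of $G$ may be directed in neither, one, or both directions). $B_{\vec{H}}(v,a)$ denotes the set of vertices reachable from $v$ by a directed path in $\vec{H}$ of length at most $a$. A weak $r$-guidance system of $G$ is a partial orientation $\vec{H}$ such that for any distinct vertices $u,v$ at distance $\ell\le r$ in $G$ there exist non-negative integers $a,b$ with $a+b=\ell-1$ such that $G$ contains an edge between $B_{\vec{H}}(u,a)$ and $B_{\vec{H}}(v,b)$. Shrub-depth: for a positive integer $m$, an $m$-signature is a function $S$ assigning to each positive integer $i$ a symmetric relation $S(i)\subseteq[m]\times[m]$. For a positive integer $d$, an $(m,d)$-tree model of a graph $G$ is a triple $(T,\varphi,S)$ where $T$ is a rooted tree with leaf set $V(G)$ in which every root-leaf path has length $d$, $\varphi:V(G)\to[m]$, $S$ is an $m$-signature, and for all $u,v\in V(G)$, if $2i$ is the distance between $u$ and $v$ in $T$ then $uv\in E(G)$ iff $(\varphi(u),\varphi(v))\in S(i)$. A class has shrub-depth at most $d$ if for some positive integer $m$ every graph in the class has an $(m,d)$-tree model; it has bounded shrub-depth if it has shrub-depth at most $d$ for some $d$. *)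

From mathcomp Require Import all_boot.
Set Implicit Arguments. Unset Strict Implicit. Unset Printing Implicit Defensive.

Record graph := Graph {
  gV :> finType;
  gadj : rel gV;
  gadj_sym : symmetric gadj;
  gadj_irr : irreflexive gadj }.

(* A rooted tree T with leaf set V(G) in which every root-leaf path has
   length d is encoded by node labels per level: node of level k (0 <= k <= d)
   above leaf u is (k, lab k u).  Level 0 = root, level d = the leaves. *)
Definition depth_d_tree (G : graph) (d : nat) (lab : nat -> G -> nat) : Prop :=
  (forall u v : G, lab 0 u = lab 0 v) /\                       (* single root *)
  (forall k, k < d -> forall u v : G,
       lab k.+1 u = lab k.+1 v -> lab k u = lab k v) /\        (* unique parents *)
  (forall u v : G, lab d u = lab d v -> u = v).                (* leaves = V(G) *)

(* Half of the distance in T between leaves u and v: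
   d minus the level of their lowest common ancestor. *)
Definition half_tdist (G : graph) (d : nat) (lab : nat -> G -> nat) (u v : G) : nat :=
  d - \max_(k < d.+1 | lab k u == lab k v) k.

Definition is_tree_model (G : graph) (m d : nat) (lab : nat -> G -> nat)
    (phi : G -> 'I_m) (S : nat -> rel 'I_m) : Prop :=
  @depth_d_tree G d lab /\
  (forall i, symmetric (S i)) /\
  (forall u v : G, u != v ->
     @gadj G u v = S (@half_tdist G d lab u v) (phi u) (phi v)).

Definition has_tree_model (m d : nat) (G : graph) : Prop :=
  exists lab phi S, @is_tree_model G m d lab phi S.

Definition shrub_depth_at_most (C : graph -> Prop) (d : nat) : Prop :=
  exists m, 0 < m /\ forall G, C G -> has_tree_model m d G.

Definition bounded_shrub_depth (C : graph -> Prop) : Prop :=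
  exists d, 0 < d /\ shrub_depth_at_most C d.

Definition partial_orientation (G : graph) (H : rel G) : Prop :=
  forall u v : G, H u v -> @gadj G u v.

Definition in_ball (G : graph) (H : rel G) (v : G) (a : nat) (w : G) : Prop :=
  exists p : seq G, size p <= a /\ path H v p /\ last v p = w.

Definition gdist_le (G : graph) (u v : G) (l : nat) : Prop :=
  exists p : seq G, size p <= l /\ path (@gadj G) u p /\ last u p = v.

Definition gdist_eq (G : graph) (u v : G) (l : nat) : Prop :=
  gdist_le u v l /\ forall l', gdist_le u v l' -> l <= l'.

Definition weak_guidance_system (G : graph) (r : nat) (H : rel G) : Prop :=
  partial_orientation H /\
  forall (u v : G) (l : nat), u != v -> l <= r -> gdist_eq u v l ->
    exists a b : nat, a + b = l.-1 /\
      exists x y : G, in_ball H u a x /\ in_ball H v b y /\ @gadj G x y.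

Definition max_outdeg_le (G : graph) (H : rel G) (c : nat) : Prop :=
  forall u : G, #|[set v | H u v]| <= c.

From mathcomp Require Import all_boot zify.
Set Implicit Arguments. Unset Strict Implicit. Unset Printing Implicit Defensive.

(* Fix a tree model of G of depth d and put K = r + 1.  Call the ancestor
   of a leaf at some level a representative if it is one of the first K
   children of its isomorphism type below its parent, where types count
   children of each type only up to K.  Orient w -> x when wx is an edge and
   all ancestors of x strictly below the lowest common ancestor of w and x
   are representatives.  Such an x is determined by that lca and, level by
   level, by the type and sibling rank of its ancestors, which bounds the
   outdegree in terms of d, m and r.
   Adjacency between distinct leaves only depends on their colours and the
   level of their lca.  Since types count up to K, any at most K leaves can
   be copied onto representatives while keeping all pairwise lca levels and
   subtree types.  Hence a shortest u-v walk of length l <= r can be rerouted,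
   with the same endpoints, so that every edge before a step of lowest lca
   is oriented forwards and every edge after it backwards. *)

Lemma exists_argmax_seq (T : eqType) (s : seq T) (f : T -> nat) : s != [::] ->
  exists2 x, x \in s & forall y, y \in s -> f y <= f x.
Proof.
elim: s => [//|a [|b s] IH] _.
  by exists a => [|y]; rewrite ?mem_head // inE => /eqP ->.
have [x xs xmax] := IH isT.
have [fax|fxa] := leqP (f a) (f x).
  exists x => [|y]; first by rewrite inE xs orbT.
  by rewrite inE => /orP [/eqP -> //|]; apply: xmax.
exists a => [|y]; first by rewrite mem_head.
by rewrite inE => /orP [/eqP -> //|/xmax fyx]; apply: leq_trans fyx (ltnW fxa).
Qed.

Lemma eq_size_undup_map (T T1 T2 : eqType) (s : seq T) (f1 : T -> T1) (f2 : T -> T2) :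
  {in s &, forall a b, (f1 a == f1 b) = (f2 a == f2 b)} ->
  size (undup (map f1 s)) = size (undup (map f2 s)).
Proof.
elim: s => [//|a s IH] ker /=.
have mem_f : (f1 a \in map f1 s) = (f2 a \in map f2 s).
  apply/mapP/mapP => -[b bs /eqP fab]; exists b => //; apply/eqP.
    by rewrite -ker ?mem_head ?inE ?bs ?orbT.
  by rewrite ker ?mem_head ?inE ?bs ?orbT.
have ker_s : {in s &, forall a b, (f1 a == f1 b) = (f2 a == f2 b)}.
  by move=> x y xs ys; apply: ker; rewrite inE ?xs ?ys orbT.
by rewrite mem_f; case: (f2 a \in map f2 s); rewrite /= IH.
Qed.

Lemma in_ball_path (G : graph) (H : rel G) (f : nat -> G) n :
  (forall t, t < n -> H (f t) (f t.+1)) -> in_ball H (f 0) n (f n).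
Proof.
elim: n f => [|n IH] f Hf; first by exists [::].
have [p [size_p [path_p last_p]]] := IH (f \o succn) (fun t lt_tn => Hf t.+1 lt_tn).
by exists (f 1 :: p); rewrite /= Hf.
Qed.

Lemma walk_of_gdist (G : graph) (u v : G) l : gdist_eq u v l ->
  exists q : nat -> G, [/\ q 0 = u, q l = v & forall t, t < l -> gadj (q t) (q t.+1)].
Proof.
move=> [[p [size_p [path_p last_p]]] min_l].
have {}size_p : size p = l by apply/eqP; rewrite eqn_leq size_p min_l //; exists p.
exists (fun t => nth u (u :: p) t); split=> // [|t lt_tl].
  by rewrite -size_p -last_nth.
by move/(pathP u): path_p; apply; rewrite size_p.
Qed.

(* Isomorphism types of subtrees of height n whose leaves carry colours in
   ['I_m]: a colour at height 0, and at height n+1 the number, capped at K,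
   of children of each type of height n. *)
Fixpoint tree_type (m K n : nat) : finType :=
  match n with 0 => 'I_m | n'.+1 => {ffun tree_type m K n' -> 'I_K.+1} : finType end.

Section TreeModel.

Variables (G : graph) (d m K : nat) (lab : nat -> G -> nat).
Variables (phi : G -> 'I_m) (S : nat -> rel 'I_m).
Hypothesis model : @is_tree_model G m d lab phi S.

Lemma lab_root (u w : G) : lab 0 u = lab 0 w.
Proof. by case: model => [[]]. Qed.

Lemma lab_leaf_inj (u w : G) : lab d u = lab d w -> u = w.
Proof. by case: model => [[_ [_ leaf_inj]] _]; apply: leaf_inj. Qed.

Lemma lab_parent k (u w : G) : k < d -> lab k.+1 u = lab k.+1 w -> lab k u = lab k w.
Proof. by case: model => [[_ [lab_par _]] _] /lab_par; apply. Qed.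

Lemma lab_ancestor i j (u w : G) : i <= j -> j <= d -> lab j u = lab j w -> lab i u = lab i w.
Proof.
elim: j => [|j IH]; first by rewrite leqn0 => /eqP ->.
rewrite leq_eqVlt => /orP [/eqP -> //|]; rewrite ltnS => le_ij lt_jd labS.
by apply: IH (ltnW lt_jd) (lab_parent lt_jd labS).
Qed.

Definition lca (u w : G) : nat := \max_(k < d.+1 | lab k u == lab k w) k.

Lemma lca_le (u w : G) : lca u w <= d.
Proof. by apply/bigmax_leqP => i _; rewrite -ltnS. Qed.

Lemma leq_lca (u w : G) k : k <= d -> (k <= lca u w) = (lab k u == lab k w).
Proof.
move=> le_kd; apply/idP/eqP => [le_k_lca|lab_k].
  have : 0 < #|[pred i : 'I_d.+1 | lab i u == lab i w]|.
    by apply/card_gt0P; exists ord0; rewrite inE /= (lab_root u w).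
  move=> /(eq_bigmax_cond val) [i]; rewrite inE => /eqP lab_i lca_i.
  move: le_k_lca; rewrite /lca lca_i => le_ki.
  exact: lab_ancestor le_ki (ltnSE (ltn_ord i)) lab_i.
have := @leq_bigmax_cond _ (fun i : 'I_d.+1 => lab i u == lab i w) val
  (Ordinal (le_kd : k < d.+1)).
by rewrite /= lab_k eqxx; apply.
Qed.

Lemma lab_lca (u w : G) k : k <= d -> k <= lca u w -> lab k u = lab k w.
Proof. by move=> le_kd; rewrite leq_lca // => /eqP. Qed.

Lemma lca_ge (u w : G) k : k <= d -> lab k u = lab k w -> k <= lca u w.
Proof. by move=> le_kd lab_k; rewrite leq_lca // lab_k. Qed.

Lemma lca_sym (u w : G) : lca u w = lca w u.
Proof. by apply: eq_bigl => i; rewrite eq_sym. Qed.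

Lemma lca_refl (u : G) : lca u u = d.
Proof. by apply/eqP; rewrite eqn_leq lca_le lca_ge. Qed.

Lemma lca_eq_depth (u w : G) : lca u w = d -> u = w.
Proof. by move=> lca_d; apply: lab_leaf_inj; apply: lab_lca; rewrite ?lca_d. Qed.

Lemma lca_lt_depth (u w : G) : u != w -> lca u w < d.
Proof.
by move=> /eqP neq_uw; rewrite ltn_neqAle lca_le andbT; apply/eqP => /lca_eq_depth.
Qed.

Lemma adj_lca (u w : G) : u != w -> gadj u w = S (d - lca u w) (phi u) (phi w).
Proof. by case: model => [_ [_ adjE]] /adjE. Qed.

Lemma lca_eq_below (a b c : G) L :
  L <= d -> lab L a = lab L b -> lca b c < L -> lca a c = lca b c.
Proof.
move=> le_Ld lab_ab lt_bc_L.
apply/eqP; rewrite eqn_leq; apply/andP; split.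
  rewrite leqNgt; apply/negP => lt_bc_ac.
  have le_Sd : (lca b c).+1 <= d by apply: leq_trans lt_bc_L le_Ld.
  have lab_ac := lab_lca le_Sd lt_bc_ac.
  have lab_ab' := lab_ancestor lt_bc_L le_Ld lab_ab.
  by have := lca_ge le_Sd (etrans (esym lab_ab') lab_ac); rewrite ltnn.
apply: lca_ge (lca_le b c) _.
by rewrite (lab_ancestor (ltnW lt_bc_L) le_Ld lab_ab) (lab_lca (lca_le b c) (leqnn _)).
Qed.

Lemma lca_exact (a c : G) L :
  L < d -> lab L a = lab L c -> lab L.+1 a != lab L.+1 c -> lca a c = L.
Proof.
move=> lt_Ld lab_L /eqP neq_S; apply/eqP; rewrite eqn_leq lca_ge ?(ltnW lt_Ld) // andbT.
by rewrite leqNgt; apply/negP => /(lab_lca lt_Ld).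
Qed.


(* [subtree_type n w] is the type of the subtree of T rooted at the ancestor
   of w at level [d - n]. *)
Fixpoint subtree_type (n : nat) : G -> tree_type m K n :=
  match n return G -> tree_type m K n with
  | 0 => phi
  | n'.+1 => fun w => [ffun t => inord (minn K (size (undup
      [seq lab (d - n') z | z <- enum G & (lab (d - n'.+1) z == lab (d - n'.+1) w)
                                         && (subtree_type n' z == t)])))]
  end.

Definition children_of_type n (w : G) (t : tree_type m K n) : seq nat :=
  undup [seq lab (d - n) z | z <- enum G & (lab (d - n.+1) z == lab (d - n.+1) w)
                                          && (subtree_type n z == t)].

Lemma subtree_typeS n (w : G) t :
  subtree_type n.+1 w t = inord (minn K (size (children_of_type w t))).
Proof. by rewrite /= ffunE. Qed.

Lemma subtree_typeS_val n (w : G) t :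
  subtree_type n.+1 w t = minn K (size (children_of_type w t)) :> nat.
Proof. by rewrite subtree_typeS inordK // ltnS geq_minl. Qed.

Lemma children_of_type_congr n (u w : G) (t : tree_type m K n) :
  lab (d - n.+1) u = lab (d - n.+1) w -> children_of_type u t = children_of_type w t.
Proof. by rewrite /children_of_type => ->. Qed.

Lemma subtree_type_congr n (u w : G) :
  n <= d -> lab (d - n) u = lab (d - n) w -> subtree_type n u = subtree_type n w.
Proof.
case: n => [_ /=|n _ lab_uw]; first by rewrite subn0 => /lab_leaf_inj ->.
by apply/ffunP => t; rewrite !subtree_typeS (children_of_type_congr t lab_uw).
Qed.

Lemma mem_children_of_type n (z w : G) (t : tree_type m K n) :
  lab (d - n.+1) z = lab (d - n.+1) w -> subtree_type n z = t ->
  lab (d - n) z \in children_of_type w t.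
Proof.
move=> lab_zw type_z; rewrite mem_undup; apply/mapP; exists z => //.
by rewrite mem_filter lab_zw type_z !eqxx mem_enum.
Qed.

Lemma children_of_typeP n (w : G) (t : tree_type m K n) l :
  l \in children_of_type w t -> exists z,
    [/\ lab (d - n.+1) z = lab (d - n.+1) w, subtree_type n z = t & lab (d - n) z = l].
Proof.
rewrite mem_undup => /mapP [z]; rewrite mem_filter => /andP [/andP [/eqP ? /eqP ?] _] ->.
by exists z.
Qed.

Definition is_rep (j : nat) (z : G) : bool :=
  index (lab j z) (children_of_type z (subtree_type (d - j) z)) < K.

Definition reps_above (g : nat) (z : G) := forall i, g < i -> i <= d -> is_rep i z.

Lemma is_rep_congr j (u w : G) :
  0 < j -> j <= d -> lab j u = lab j w -> is_rep j u = is_rep j w.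
Proof.
move=> j_gt0 le_jd lab_uw; rewrite /is_rep lab_uw.
rewrite (@subtree_type_congr (d - j) u w) ?leq_subr ?subKn //.
rewrite (@children_of_type_congr (d - j) u w) //.
by apply: (lab_ancestor _ le_jd lab_uw); lia.
Qed.

(* Every nonempty class of children of a given type contains a representative,
   so one can walk down from w to a leaf through representatives only, copying
   the types met by y on its way down. *)
Lemma exists_rep_descendant n (w y : G) :
  0 < K -> n <= d -> subtree_type n w = subtree_type n y ->
  exists z, [/\ lab (d - n) z = lab (d - n) w,
    forall n', n' <= n -> subtree_type n' z = subtree_type n' y & reps_above (d - n) z].
Proof.
move=> K_gt0; elim: n w => [|n IH] w le_nd type_wy.
  exists w; split=> [|n'|i]; [by []| by rewrite leqn0 => /eqP -> | lia].
set t := subtree_type n y.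
have : 0 < size (children_of_type w t).
  have y_child := mem_children_of_type (erefl (lab (d - n.+1) y)) (erefl t).
  have : 0 < minn K (size (children_of_type y t)).
    by rewrite leq_min K_gt0; case: (children_of_type y t) y_child.
  by rewrite -subtree_typeS_val -type_wy subtree_typeS_val leq_min => /andP [].
case E : (children_of_type w t) => [//|l0 s] _.
have [w' [lab_w'w type_w' lab_w'l0]] : exists w',
    [/\ lab (d - n.+1) w' = lab (d - n.+1) w, subtree_type n w' = t & lab (d - n) w' = l0].
  by apply: children_of_typeP; rewrite E mem_head.
have [z [lab_zw' type_z reps_z]] := IH w' (ltnW le_nd) type_w'.
have lab_zw : lab (d - n.+1) z = lab (d - n.+1) w.
  by rewrite -lab_w'w; apply: lab_ancestor lab_zw'; lia.
exists z; split=> // [n'|i lt_i le_id].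
  rewrite leq_eqVlt ltnS => /orP [/eqP ->|]; last exact: type_z.
  by rewrite -type_wy; apply: subtree_type_congr.
have [lt_ni|le_in] := ltnP (d - n) i; first exact: reps_z.
have -> : i = d - n by lia.
by rewrite (@is_rep_congr _ z w') ?subn_gt0 ?leq_subr // /is_rep subKn ?(ltnW le_nd) //
  type_w' (children_of_type_congr t lab_w'w) E lab_w'l0 /= eqxx.
Qed.

Definition mimics (P F : nat -> G) (X : seq nat) :=
  {in X &, forall a b, lca (F a) (F b) = lca (P a) (P b)} /\
  {in X, forall a n, n <= d -> subtree_type n (F a) = subtree_type n (P a)}.

Section FreshChild.

Variables (P F : nat -> G) (X : seq nat) (y b0 : nat) (L : nat).
Hypotheses (mimic : mimics P F X) (size_X : size X < K) (b0X : b0 \in X) (lt_Ld : L < d).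
Hypothesis lab_yb0 : lab L (P y) = lab L (P b0).
Hypothesis apart_y : {in X, forall b, lab L.+1 (P b) != lab L.+1 (P y)}.

Let n := d - L.+1.
Let t := subtree_type n (P y).

Let below (Q : nat -> G) b := (lab L (Q b) == lab L (Q b0)) && (subtree_type n (Q b) == t).

(* Below the level-L ancestor of P b0 the children of type t include the one
   of P y, which no P b reaches; F copies the other ones, so fewer than
   min(K, #children of type t) of them are reached by the F b. *)
Lemma exists_unreached_child : exists2 l, l \in take K (children_of_type (F b0) t) &
  {in X, forall b, below F b -> lab L.+1 (F b) != l}.
Proof.
have [lca_F type_F] := mimic.
have dn : d - n = L.+1 by rewrite /n; lia.
have dnS : d - n.+1 = L by rewrite /n; lia.
set hitF := undup [seq lab L.+1 (F b) | b <- X & below F b].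
set hitP := undup [seq lab L.+1 (P b) | b <- X & below P b].
have below_FP : {in X, below F =1 below P}.
  move=> b bX; rewrite /below type_F ?leq_subr // -!leq_lca ?(ltnW lt_Ld) //.
  by rewrite lca_F.
have size_hit : size hitF = size hitP.
  rewrite /hitF /hitP -(eq_in_filter below_FP); apply: eq_size_undup_map => a b.
  by rewrite !mem_filter => /andP [_ aX] /andP [_ bX]; rewrite -!leq_lca // lca_F.
have lt_hitP : size hitP < size (children_of_type (P b0) t).
  have yP : lab L.+1 (P y) \notin hitP.
    rewrite mem_undup; apply/mapP => -[b]; rewrite mem_filter => /andP [_ /apart_y].
    by rewrite eq_sym => /eqP.
  apply: (uniq_leq_size (s1 := lab L.+1 (P y) :: hitP)); first by rewrite /= yP undup_uniq.
  move=> l; rewrite inE mem_undup -dn => /orP [/eqP ->|/mapP [b]].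
    by apply: mem_children_of_type; rewrite ?dnS.
  rewrite mem_filter => /andP [/andP [/eqP lab_b /eqP type_b] _] ->.
  by apply: mem_children_of_type; rewrite ?dnS.
have lt_hitF : size hitF < size (take K (children_of_type (F b0) t)).
  have := congr1 (fun f : tree_type m K n.+1 => f t : nat) (type_F b0 b0X n.+1 (ltac:(lia))).
  rewrite size_take_min !subtree_typeS_val => ->; rewrite leq_min size_hit lt_hitP andbT.
  rewrite -size_hit; apply: leq_ltn_trans size_X; apply: leq_trans (size_undup _) _.
  by rewrite size_map size_filter count_size.
have /allPn [l lK l_hit] : ~~ all (mem hitF) (take K (children_of_type (F b0) t)).
  apply/negP => /allP sub; move: lt_hitF; rewrite ltnNge uniq_leq_size //.
  by apply: take_uniq; apply: undup_uniq.
exists l => // b bX below_b; apply: contraNneq l_hit => <-.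
by rewrite /= mem_undup map_f // mem_filter below_b.
Qed.

Lemma exists_fresh_child : exists w, [/\ lab L w = lab L (F b0),
  subtree_type n w = t, is_rep L.+1 w & {in X, forall b, lab L.+1 w != lab L.+1 (F b)}].
Proof.
have [l lK unreached] := exists_unreached_child.
have dn : d - n = L.+1 by rewrite /n; lia.
have dnS : d - n.+1 = L by rewrite /n; lia.
have [w [lab_w type_w lab_wl]] := children_of_typeP (mem_take lK).
rewrite dnS in lab_w; rewrite dn in lab_wl.
exists w; split=> // [|b bX].
  rewrite /is_rep -/n type_w lab_wl (children_of_type_congr _ (w := F b0)) ?dnS //.
  exact: index_ltn.
apply/eqP => lab_wb.
suff below_b : below F b by move: (unreached b bX below_b); rewrite -lab_wb lab_wl eqxx.
rewrite /below -type_w -lab_w (subtree_type_congr (w := w)) ?leq_subr ?dn //.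
by rewrite (lab_parent lt_Ld lab_wb) !eqxx.
Qed.

End FreshChild.

(* Choose b0 whose image P b0 is closest to P y, branching off at level L.
   Then z is sent below the level-L ancestor of F b0 into a fresh
   representative child of the right type, and from there down through
   representatives. *)
Lemma extend_mimic P F X y g :
  X != [::] -> size X < K -> mimics P F X ->
  {in X, forall b, lca (P y) (P b) <= g \/ reps_above g (F b)} ->
  exists z, [/\ {in X, forall b, lca z (F b) = lca (P y) (P b)},
    forall n, n <= d -> subtree_type n z = subtree_type n (P y) & reps_above g z].
Proof.
move=> X0 size_X mimic reps_g; have [lca_F type_F] := mimic.
have [b0 b0X max_b0] := exists_argmax_seq (fun b => lca (P y) (P b)) X0.
set L := lca (P y) (P b0) in max_b0.
have [lt_Ld|le_dL] := ltnP L d; last first.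
  have /lca_eq_depth eq_y : L = d by apply/eqP; rewrite eqn_leq lca_le.
  exists (F b0); split=> [b bX|n le_nd|]; rewrite ?eq_y ?lca_F ?type_F //.
  by case: (reps_g b0 b0X) => // le_Lg i lt_gi le_id; lia.
have lab_yb0 : lab L (P y) = lab L (P b0) by apply: lab_lca; rewrite ?(ltnW lt_Ld).
have apart : {in X, forall b, lab L.+1 (P b) != lab L.+1 (P y)}.
  move=> b bX; apply/eqP => /esym /(lca_ge lt_Ld).
  by have := max_b0 b bX; rewrite /= -/L; lia.
have [w [lab_w type_w rep_w fresh_w]] :=
  exists_fresh_child mimic size_X b0X lt_Ld lab_yb0 apart.
have [z [lab_zw type_z reps_z]] :=
  exists_rep_descendant (leq_ltn_trans (leq0n _) size_X) (leq_subr L.+1 d) type_w.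
rewrite subKn // in lab_zw reps_z.
have lab_zb0 k : k <= L -> lab k z = lab k (F b0).
  by move=> le_kL; rewrite -(lab_ancestor le_kL (ltnW lt_Ld) lab_w);
    apply: lab_ancestor lab_zw; lia.
exists z; split=> [b bX|n le_nd|i lt_gi le_id].
- have [le_L_lca|lt_lca_L] := leqP L (lca (P b0) (P b)).
    have lab_Fb : lab L (F b0) = lab L (F b).
      by apply: lab_lca; rewrite ?lca_F ?(ltnW lt_Ld).
    have lab_Pb : lab L (P y) = lab L (P b).
      by rewrite lab_yb0; apply: lab_lca; rewrite ?(ltnW lt_Ld).
    rewrite (lca_exact lt_Ld lab_Pb); last by rewrite eq_sym apart.
    by apply: lca_exact; [| rewrite lab_zb0 | rewrite lab_zw fresh_w].
  rewrite (lca_eq_below (ltnW lt_Ld) (lab_zb0 L (leqnn L))) ?lca_F //.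
  by rewrite (lca_eq_below (ltnW lt_Ld) lab_yb0).
- have [le_n|lt_n] := leqP n (d - L.+1); first exact: type_z.
  rewrite (subtree_type_congr (w := F b0)) ?lab_zb0 ?type_F //; last by lia.
  by apply: subtree_type_congr => //; apply/esym; apply: lab_ancestor lab_yb0; lia.
- have [lt_Si|le_iS] := ltnP L.+1 i; first exact: reps_z.
  have [eq_iS|lt_iS] := eqVneq i L.+1.
    by rewrite eq_iS (is_rep_congr (w := w)).
  case: (reps_g b0 b0X) => [le_Lg|reps_b0]; first lia.
  by rewrite (is_rep_congr (w := F b0)) ?lab_zb0 ?reps_b0 //; lia.
Qed.

Lemma mimics_rcons P F X y z :
  mimics P F X -> y \notin X ->
  {in X, forall b, lca z (F b) = lca (P y) (P b)} ->
  (forall n, n <= d -> subtree_type n z = subtree_type n (P y)) ->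
  mimics P (fun t => if t == y then z else F t) (rcons X y).
Proof.
move=> [lca_F type_F] yX lca_z type_z.
have F_X b : b \in X -> (if b == y then z else F b) = F b.
  by case: eqP => // -> bX; rewrite bX in yX.
split=> [a b|a]; rewrite !mem_rcons !inE.
  case/predU1P => [->|aX] /predU1P [->|bX]; rewrite ?eqxx ?F_X ?lca_refl //.
  - exact: lca_z.
  - by rewrite lca_sym lca_z // lca_sym.
  - exact: lca_F.
by case/predU1P => [->|aX] n le_nd; rewrite ?eqxx ?F_X ?type_z ?type_F.
Qed.

Lemma extend_mimic_seq P g Y : forall X F,
  X != [::] -> uniq (X ++ Y) -> size (X ++ Y) <= K -> mimics P F X ->
  {in X & Y, forall b y, lca (P y) (P b) <= g \/ reps_above g (F b)} ->
  exists F', [/\ {in X, F' =1 F}, mimics P F' (X ++ Y) &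
                {in Y, forall y, reps_above g (F' y)}].
Proof.
elim: Y => [|y Y IH] X F X0 uniq_XY size_XY mimic reps_g.
  by exists F; rewrite cats0.
have size_X : size X < K by move: size_XY; rewrite size_cat /=; lia.
have [z [lca_z type_z reps_z]] :=
  extend_mimic X0 size_X mimic (fun b bX => reps_g b y bX (mem_head _ _)).
have yX : y \notin X by move: uniq_XY; rewrite cat_uniq /= => /and4P [_ /norP []].
set F1 := fun t => if t == y then z else F t.
have F1_X : {in X, F1 =1 F}.
  by move=> b bX; rewrite /F1; case: eqP => // eq_by; rewrite -eq_by bX in yX.
have [F' [F'_X mimic' reps']] : exists F', [/\ {in rcons X y, F' =1 F1},
    mimics P F' (rcons X y ++ Y) & {in Y, forall y, reps_above g (F' y)}].
  apply: IH; rewrite ?cat_rcons //.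
  - by rewrite -size_eq0 size_rcons.
  - exact: mimics_rcons.
  move=> b y'; rewrite mem_rcons inE => /predU1P [->|bX] y'Y.
    by right; rewrite /F1 eqxx.
  by rewrite F1_X //; apply: reps_g; rewrite // inE y'Y orbT.
exists F'; split=> [b bX||y'].
- by rewrite F'_X ?F1_X // mem_rcons inE bX orbT.
- by rewrite cat_rcons in mimic'.
- rewrite inE => /predU1P [->|]; last exact: reps'.
  by rewrite F'_X ?mem_rcons ?mem_head // /F1 eqxx.
Qed.

Definition step_lca (q : nat -> G) t := lca (q t) (q t.+1).

Definition rerouting (q0 q : nat -> G) (l : nat) :=
  [/\ q 0 = q0 0, q l = q0 l, forall t, t < l -> step_lca q t = step_lca q0 t
    & forall t, t <= l -> phi (q t) = phi (q0 t)].

Lemma rerouting_refl q l : rerouting q q l.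
Proof. by []. Qed.

Lemma rerouting_trans q0 q1 q2 l :
  rerouting q0 q1 l -> rerouting q1 q2 l -> rerouting q0 q2 l.
Proof.
move=> [h0 hl hlca hphi] [h0' hl' hlca' hphi'].
by split=> [||t lt_tl|t le_tl]; rewrite ?h0' ?hl' ?hlca' ?hphi' ?hlca ?hphi.
Qed.

Lemma rerouting_rev q0 q q0' q' l :
  (forall t, t <= l -> q0' t = q0 (l - t)) -> (forall t, t <= l -> q' t = q (l - t)) ->
  rerouting q0 q l -> rerouting q0' q' l.
Proof.
move=> q0'E q'E [h0 hl hlca hphi].
have stepE (f f' : nat -> G) t : (forall t, t <= l -> f' t = f (l - t)) -> t < l ->
    step_lca f' t = step_lca f (l - t.+1).
  move=> f'E lt_tl; rewrite /step_lca !f'E ?(ltnW lt_tl) // lca_sym; congr lca; congr f; lia.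
split=> [||t lt_tl|t le_tl].
- by rewrite q0'E ?q'E ?subn0.
- by rewrite q0'E ?q'E ?subnn.
- by rewrite (stepE q q') ?(stepE q0 q0') ?hlca //; lia.
- by rewrite q0'E ?q'E ?hphi ?leq_subr.
Qed.

Lemma lab_segment_const (q : nat -> G) g i j : g < d ->
  (forall s, i <= s -> s < j -> g < step_lca q s) ->
  forall t, i <= t -> t <= j -> lab g.+1 (q t) = lab g.+1 (q i).
Proof.
move=> lt_gd inner; elim=> [|t IH] le_it le_tj; first by have -> : i = 0 by lia.
have [->//|ne_it] := eqVneq i t.+1.
rewrite -(IH _ (ltnW le_tj)); last by lia.
by apply/esym/lab_lca => //; apply: inner; lia.
Qed.

Lemma segment_lca_boundary (q : nat -> G) g i j y :
  0 < i -> i <= y -> y <= j -> step_lca q i.-1 <= g -> step_lca q j <= g ->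
  (forall s, i <= s -> s < j -> g < step_lca q s) ->
  lca (q y) (q i.-1) <= g /\ lca (q y) (q j.+1) <= g.
Proof.
move=> i_gt0 le_iy le_yj left right inner.
have [le_dg|lt_gd] := leqP d g; first by split; apply: leq_trans (lca_le _ _) le_dg.
have lab_seg := lab_segment_const lt_gd inner.
have lab_y := lab_seg y le_iy le_yj.
have lab_j := lab_seg j (leq_trans le_iy le_yj) (leqnn j).
have far b : lab g.+1 (q b) != lab g.+1 (q i) -> lca (q y) (q b) <= g.
  by move=> ne_b; rewrite leqNgt; apply: contra ne_b => /(lab_lca lt_gd) <-; rewrite lab_y.
split; apply: far.
  apply: contraTneq left => eq_b; rewrite -ltnNge /step_lca prednK //.
  exact: lca_ge lt_gd eq_b.
apply: contraTneq right => eq_b; rewrite -ltnNge.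
by apply: lca_ge lt_gd _; rewrite lab_j eq_b.
Qed.

(* The segment and its two neighbours, at most K positions, are copied by
   [extend_mimic_seq] with the neighbours kept fixed; the neighbours branch
   off the segment at level <= g, so the copies can be representatives above
   level g. *)
Lemma reroute_segment q l i j g :
  (j - i).+2 < K -> 0 < i -> i <= j -> j < l ->
  step_lca q i.-1 <= g -> step_lca q j <= g ->
  (forall s, i <= s -> s < j -> g < step_lca q s) ->
  exists q', [/\ rerouting q q' l, forall t, t < i \/ j < t -> q' t = q t
    & forall t, i <= t -> t <= j -> reps_above g (q' t)].
Proof.
move=> size_seg i_gt0 le_ij lt_jl left right inner.
set X0 := [:: i.-1; j.+1]; set Y := iota i (j - i).+1.
have memXY t : (t \in X0 ++ Y) = (i.-1 <= t <= j.+1).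
  by rewrite mem_cat !inE mem_iota; apply/idP/idP; lia.
have uniqXY : uniq (X0 ++ Y).
  rewrite cat_uniq iota_uniq andbT; apply/andP; split; first by rewrite /= inE andbT; lia.
  by apply/hasPn => t; rewrite mem_iota !inE; lia.
have boundary : {in X0 & Y, forall b y, lca (q y) (q b) <= g \/ reps_above g (q b)}.
  move=> b y; rewrite mem_iota !inE => b_end /andP [le_iy lt_y]; left.
  have [] := segment_lca_boundary i_gt0 le_iy (_ : y <= j) left right inner; first lia.
  by case/orP: b_end => /eqP ->.
have size_XY : size (X0 ++ Y) <= K by rewrite size_cat size_iota /=; lia.
have mimic0 : mimics q q X0 by [].
have [F [F_X0 [lca_F type_F] reps_F]] :=
  extend_mimic_seq (X := X0) isT uniqXY size_XY mimic0 boundary.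
set q' := fun t => if i <= t <= j then F t else q t.
have q'q t : t < i \/ j < t -> q' t = q t by rewrite /q'; case: ifP => //; lia.
have q'F t : i.-1 <= t <= j.+1 -> q' t = F t.
  move=> range; rewrite /q'; case: ifP => // out.
  by rewrite F_X0 // !inE; apply/orP; move: out => /negbT; lia.
exists q'; split=> // [|t le_it le_tj].
  split=> [||t lt_tl|t le_tl]; try by rewrite q'q //; lia.
    have [range|out] := boolP (i.-1 <= t <= j); last by rewrite /step_lca !q'q //; lia.
    by rewrite /step_lca !q'F ?lca_F ?memXY //; lia.
  have [range|out] := boolP (i <= t <= j); last by rewrite q'q //; lia.
  by rewrite q'F; [apply: (type_F t _ 0); rewrite ?memXY |]; lia.
by rewrite q'F; [apply: reps_F; rewrite mem_iota|]; lia.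
Qed.

(* Step n+1 re-routes the segment from n+1 up to the first position j whose
   step goes no higher than step n; the minimality of step a gives j <= a. *)
Lemma forward_sweep q0 l a :
  l < K -> a < l -> (forall s, s <= a -> step_lca q0 a <= step_lca q0 s) ->
  forall q, rerouting q0 q l -> exists q', [/\ rerouting q0 q' l,
    forall t, a < t -> q' t = q t &
    forall t, 0 < t -> t <= a -> reps_above (step_lca q0 t.-1) (q' t)].
Proof.
move=> lt_lK lt_al min_a q re_q.
suff sweep n : n <= a -> exists q', [/\ rerouting q0 q' l,
    forall t, a < t -> q' t = q t &
    forall t, 0 < t -> t <= n -> reps_above (step_lca q0 t.-1) (q' t)].
  exact: sweep.
elim: n => [|n IH] le_na; first by exists q; split=> // t; lia.
have [q1 [re1 q1q reps1]] := IH (ltnW le_na).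
have [_ _ step1 _] := re1.
have ex_j : exists j, (n.+1 <= j) && (step_lca q0 j <= step_lca q0 n).
  by exists a; rewrite le_na min_a // ltnW.
have [j /andP [le_nj le_j_n] min_j] := ex_minnP ex_j.
have le_ja : j <= a by apply: min_j; rewrite le_na min_a // ltnW.
have left : step_lca q1 n.+1.-1 <= step_lca q0 n by rewrite step1 //; lia.
have right : step_lca q1 j <= step_lca q0 n by rewrite step1 //; lia.
have inner s : n.+1 <= s -> s < j -> step_lca q0 n < step_lca q1 s.
  move=> le_ns lt_sj; rewrite step1; last lia.
  by rewrite ltnNge; apply: contraTN lt_sj => le_s_n; rewrite -leqNgt min_j // le_ns.
have [q2 [re2 q2q reps2]] :=
  @reroute_segment q1 l n.+1 j _ ltac:(lia) (ltn0Sn n) le_nj ltac:(lia) left right inner.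
exists q2; split=> [|t lt_at|t t_gt0 le_tn].
- exact: rerouting_trans re1 re2.
- by rewrite q2q ?q1q //; right; lia.
- have [->|ne_tn] := eqVneq t n.+1; first by apply: reps2.
  by rewrite q2q; [apply: reps1 | left]; lia.
Qed.

(* Position a carries the lowest step of q0.  Steps 1..a are made to point
   forwards by a forward sweep, and steps a+1..l-1 backwards by a forward
   sweep of the reversed walk. *)
Lemma exists_guided_rerouting q0 l : 0 < l -> l < K ->
  exists a, a < l /\ exists q, [/\ rerouting q0 q l,
    forall t, 0 < t -> t <= a -> reps_above (step_lca q0 t.-1) (q t)
  & forall t, a < t -> t < l -> reps_above (step_lca q0 t) (q t)].
Proof.
move=> l_gt0 lt_lK.
have iota_l : iota 0 l != [::] by rewrite -size_eq0 size_iota -lt0n.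
have [a] := exists_argmax_seq (fun t => d - step_lca q0 t) iota_l.
rewrite mem_iota add0n => lt_al max_a.
have min_a s : s < l -> step_lca q0 a <= step_lca q0 s.
  move=> lt_sl; move: (max_a s); rewrite mem_iota add0n lt_sl => /(_ isT).
  by move: (lca_le (q0 s) (q0 s.+1)) (lca_le (q0 a) (q0 a.+1)); rewrite /step_lca; lia.
exists a; split=> //.
have [q1 [re1 _ forward]] := forward_sweep lt_lK lt_al
  (fun s le_sa => min_a s (leq_ltn_trans le_sa lt_al)) (rerouting_refl q0 l).
set rq0 := fun t => q0 (l - t).
have step_rq0 t : t < l -> step_lca rq0 t = step_lca q0 (l - t.+1).
  by move=> lt_tl; rewrite /step_lca /rq0 lca_sym; congr lca; congr q0; lia.
have re1_rev : rerouting rq0 (fun t => q1 (l - t)) l.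
  exact: rerouting_rev (fun _ _ => erefl) (fun _ _ => erefl) re1.
have min_rev s : s <= l.-1 - a -> step_lca rq0 (l.-1 - a) <= step_lca rq0 s.
  move=> le_s; rewrite !step_rq0; try lia.
  have -> : l - (l.-1 - a).+1 = a by lia.
  by apply: min_a; lia.
have [q2 [re2 q2q backward]] :=
  forward_sweep (a := l.-1 - a) lt_lK ltac:(lia) min_rev re1_rev.
exists (fun t => q2 (l - t)); split=> [|t t_gt0 le_ta|t lt_at lt_tl].
- by apply: rerouting_rev re2 => // t le_tl; rewrite /rq0 subKn.
- by rewrite q2q /= ?subKn; [apply: forward|..]; lia.
- have := backward (l - t) ltac:(lia) ltac:(lia).
  rewrite step_rq0; last lia.
  by have -> : l - (l - t).-1.+1 = t by lia.
Qed.

Definition guide_rel : rel G :=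
  fun w x => gadj w x && [forall i : 'I_d.+1, (lca w x < i) ==> is_rep i x].

Lemma guide_relP w x : reflect (gadj w x /\ reps_above (lca w x) x) (guide_rel w x).
Proof.
apply: (iffP andP) => -[adj_wx reps]; split=> //.
  by move=> i lt_i le_id; move/forallP/(_ (Ordinal (le_id : i < d.+1)))/implyP: reps; apply.
by apply/forallP => i; apply/implyP => lt_i; apply: reps lt_i (ltnSE (ltn_ord i)).
Qed.

Lemma rerouting_adj q0 q l : rerouting q0 q l ->
  (forall t, t < l -> gadj (q0 t) (q0 t.+1)) -> forall t, t < l -> gadj (q t) (q t.+1).
Proof.
move=> [_ _ step_q phi_q] adj0 t lt_tl.
have ne0 : q0 t != q0 t.+1.
  by apply: contraTneq (adj0 t lt_tl) => ->; rewrite gadj_irr.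
have ne : q t != q t.+1.
  apply: contraTneq (lca_lt_depth ne0) => eq_q.
  by rewrite -/(step_lca _ _) -step_q // /step_lca eq_q lca_refl ltnn.
have le_tl := ltnW lt_tl.
by rewrite adj_lca // -/(step_lca q t) step_q // !phi_q // /step_lca -adj_lca // adj0.
Qed.

Lemma guide_rel_weak_guidance r : r < K -> weak_guidance_system r guide_rel.
Proof.
move=> lt_rK; split=> [u v /andP [] //|u v l ne_uv le_lr /walk_of_gdist [q0 [q0_0 q0_l adj0]]].
have l_gt0 : 0 < l.
  by case: l q0_l {le_lr adj0} => // q0_0'; rewrite -q0_0 -q0_0' eqxx in ne_uv.
have [a [lt_al [q [re forward backward]]]] :=
  exists_guided_rerouting q0 l_gt0 (leq_ltn_trans le_lr lt_rK).
have adj := rerouting_adj re adj0.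
have [q_0 q_l step_q _] := re.
exists a, (l.-1 - a); split; first lia.
exists (q a), (q a.+1); split; [|split; last exact: adj].
  rewrite -q0_0 -q_0; apply: in_ball_path => t lt_ta; apply/guide_relP; split.
    by apply: adj; lia.
  by rewrite -/(step_lca q t) step_q; [apply: (forward t.+1)|]; lia.
have := @in_ball_path _ guide_rel (fun t => q (l - t)) (l.-1 - a).
rewrite /= subn0 q_l q0_l; have -> : l - (l.-1 - a) = a.+1 by lia.
apply=> t lt_t; have -> : l - t = (l - t.+1).+1 by lia.
apply/guide_relP; split; first by rewrite gadj_sym; apply: adj; lia.
by rewrite lca_sym -/(step_lca q _) step_q; [apply: backward|]; lia.
Qed.

Definition type_count := \max_(n < d.+1) #|tree_type m K n|.

Lemma enum_rank_type_lt n (t : tree_type m K n) : n <= d -> enum_rank t < type_count.+1.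
Proof.
move=> le_nd; rewrite ltnS; apply: leq_trans (ltnW (ltn_ord _)) _.
exact: (@leq_bigmax _ (fun n : 'I_d.+1 => #|tree_type m K n|) (Ordinal (le_nd : n < d.+1))).
Qed.

(* A leaf whose ancestors below level g are all representatives is determined
   by its ancestor at level g and by the types and sibling ranks of the
   ancestors below. *)
Definition rep_code (x : G) : {ffun 'I_d.+1 -> 'I_type_count.+1 * 'I_K.+1} :=
  [ffun i : 'I_d.+1 => (inord (enum_rank (subtree_type (d - i) x)),
     inord (index (lab i x) (children_of_type x (subtree_type (d - i) x))))].

Lemma rep_code_inj g (x y : G) : g <= d -> lab g x = lab g y ->
  reps_above g x -> reps_above g y -> rep_code x = rep_code y -> x = y.
Proof.
move=> le_gd lab_g reps_x reps_y code_xy; apply: lab_leaf_inj.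
suff lab_xy i : i <= d -> lab i x = lab i y by apply: lab_xy.
elim: i => [|i IH] le_id; first exact: lab_root.
have [le_ig|lt_gi] := leqP i.+1 g; first exact: lab_ancestor le_ig le_gd lab_g.
have := congr1 (fun c : {ffun 'I_d.+1 -> _} => c (Ordinal (le_id : i.+1 < d.+1))) code_xy.
rewrite !ffunE => -[/(congr1 (@nat_of_ord _)) type_eq /(congr1 (@nat_of_ord _)) index_eq].
set n := d - i.+1 in type_eq index_eq.
have dn : d - n = i.+1 by rewrite /n; lia.
have dnS : d - n.+1 = i by rewrite /n; lia.
have lab_i : lab (d - n.+1) x = lab (d - n.+1) y by rewrite dnS IH // ltnW.
have type_xy : subtree_type n x = subtree_type n y.
  by apply/enum_rank_inj/ord_inj; rewrite !inordK ?enum_rank_type_lt ?leq_subr in type_eq.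
have children_xy :
    children_of_type x (subtree_type n y) = children_of_type y (subtree_type n y).
  exact: children_of_type_congr.
have := reps_x i.+1 lt_gi le_id; have := reps_y i.+1 lt_gi le_id.
rewrite /is_rep -/n type_xy children_xy => rep_y rep_x.
rewrite -/n type_xy children_xy !inordK in index_eq; try by apply: ltnW.
by apply: (index_inj 0 _ _ index_eq); rewrite -dn; apply: mem_children_of_type.
Qed.

Lemma guide_rel_outdeg : max_outdeg_le guide_rel (d.+1 * (type_count.+1 * K.+1) ^ d.+1).
Proof.
move=> u; pose f x := (Ordinal (lca_le u x : lca u x < d.+1), rep_code x).
have := @leq_card_in _ _ f [set v | guide_rel u v].
rewrite card_prod card_ord card_ffun card_prod !card_ord; apply.
move=> x y; rewrite !inE => /guide_relP [_ reps_x] /guide_relP [_ reps_y] [lca_xy code_xy].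
apply: (rep_code_inj (lca_le u x)) => //; last by rewrite lca_xy.
by rewrite -(lab_lca (lca_le u x) (leqnn _)) lca_xy (lab_lca (lca_le u y) (leqnn _)).
Qed.

End TreeModel.

Theorem lemma8 (C : graph -> Prop) :
  bounded_shrub_depth C ->
  forall r : nat, 0 < r ->
  exists c : nat, 0 < c /\
    forall G : graph, C G ->
      exists H : rel G, weak_guidance_system r H /\ max_outdeg_le H c.
Proof.
move=> [d [_ [m [_ model_C]]]] r _.
exists (d.+1 * ((type_count d m r.+1).+1 * r.+2) ^ d.+1).
split=> [|G /model_C [lab [phi [S model]]]]; first by rewrite muln_gt0 expn_gt0.
exists (guide_rel d r.+1 lab phi); split.
- exact: guide_rel_weak_guidance model r (ltnSn r).
- exact: guide_rel_outdeg model.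
Qed.
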